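(* Consider the following game over slots $1,\dots,T$ with $N\ge2$ users. The BS chooses a pmf $\mathbf p=(p_1,\dots,p_N)$ and in every slot, independently, schedules user $i$ with probability $p_i$. The adversary chooses a blocking matrix $\sigma\in\{0,1\}^{N\times T}$, where $\sigma_i(t)=0$ means user $i$ is blocked in slot $t$. Feasibility means $\sum_{i,t}(1-\sigma_i(t))\le\alpha T$ and at most one user is blocked per slot, where $0<\alpha<1$. Ages satisfy $a_i(1)=1$ and $a_i(t+1)=1$ if user $i$ is scheduled and not blocked in slot $t$, and $a_i(t+1)=a_i(t)+1$ otherwise. The payoff is $\Delta^{\mathbf p,\sigma}=\frac1T\sum_{t=1}^T\frac1N\sum_i\mathbb E[a_i(t)]$; the BS minimizes it and the adversary maximizes it. Then, for all sufficiently large $T$ with $\alpha T\in\mathbb Z$, this game has no Nash equilibrium. That is, there is no pair $(\bar{\mathbf p},\bar\sigma)$ with $\Delta^{\bar{\mathbf p},\bar\sigma}\le\Delta^{\mathbf p,\bar\sigma}$ for all pmfs $\mathbf p$ and $\Delta^{\bar{\mathbf p},\bar\sigma}\ge\Delta^{\bar{\mathbf p},\sigma}$ for all feasible $\sigma$. *)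

From HB Require Import structures.
From mathcomp Require Import all_boot all_order all_algebra.
From mathcomp Require Import reals.
Set Implicit Arguments. Unset Strict Implicit. Unset Printing Implicit Defensive.
Import Order.TTheory GRing.Theory Num.Theory.
Local Open Scope ring_scope.

(* Users are indexed by 'I_N, slots by 'I_T (slot t+1 of the paper is the
   ordinal t).  A blocking matrix sig : 'M[bool]_(N,T) has
   sig i t = true  <-> sigma_i(t) = 1 (not blocked),
   sig i t = false <-> sigma_i(t) = 0 (user i blocked in slot t). *)

Section Game.
Variables (R : realType) (N T : nat).

Definition is_pmf (p : 'I_N -> R) : Prop :=
  (forall i, 0 <= p i) /\ \sum_(i < N) p i = 1.

Definition feasible (alpha : R) (sig : 'M[bool]_(N, T)) : Prop :=
  ((\sum_(i < N) \sum_(t < T) (~~ sig i t : nat))%N%:R <= alpha * T%:R) /\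
  (forall t : 'I_T, #|[set i : 'I_N | ~~ sig i t]| <= 1)%N.

(* A realisation of the BS's random schedule: sch t is the user scheduled
   in slot t. Its probability under the iid pmf p. *)
Definition sched_prob (p : 'I_N -> R) (sch : {ffun 'I_T -> 'I_N}) : R :=
  \prod_(t < T) p (sch t).

Definition reset (sig : 'M[bool]_(N, T)) (sch : {ffun 'I_T -> 'I_N})
  (i : 'I_N) (k : nat) : bool :=
  match (insub k : option 'I_T) with
  | Some t => (sch t == i) && sig i t
  | None => false
  end.

(* age sig sch i k = a_i(k+1): a_i(1) = 1, a_i(t+1) = 1 on reset in slot t,
   a_i(t) + 1 otherwise *)
Fixpoint age (sig : 'M[bool]_(N, T)) (sch : {ffun 'I_T -> 'I_N})
  (i : 'I_N) (k : nat) : nat :=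
  match k with
  | 0 => 1
  | k'.+1 => if reset sig sch i k' then 1 else (age sig sch i k').+1
  end.

Definition exp_age (p : 'I_N -> R) (sig : 'M[bool]_(N, T)) (i : 'I_N)
  (k : nat) : R :=
  \sum_(sch : {ffun 'I_T -> 'I_N}) sched_prob p sch * (age sig sch i k)%:R.

Definition payoff (p : 'I_N -> R) (sig : 'M[bool]_(N, T)) : R :=
  T%:R^-1 * \sum_(t < T) (N%:R^-1 * \sum_(i < N) exp_age p sig i t).

Definition nash_eq (alpha : R) (pb : 'I_N -> R) (sb : 'M[bool]_(N, T)) : Prop :=
  is_pmf pb /\ feasible alpha sb /\
  (forall p, is_pmf p -> payoff pb sb <= payoff p sb) /\
  (forall sig, feasible alpha sig -> payoff pb sig <= payoff pb sb).

End Game.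

From HB Require Import structures.
From mathcomp Require Import all_boot all_order all_algebra.
From mathcomp Require Import reals.
From mathcomp Require Import perm boolp ring lra zify.
Import Order.TTheory GRing.Theory Num.Theory.
Local Open Scope ring_scope.

Set Implicit Arguments. Unset Strict Implicit. Unset Printing Implicit Defensive.

(* Swapping two users preserves feasibility, and the total expected age is
   strictly convex in the scheduling probabilities, so in an equilibrium the
   BS plays the uniform pmf (keep probability y = 1 - 1/N per slot).  Against
   it, a user blocked in c slots gains at most c(c-1)/2 + cN in total age,
   whereas blocking one user during a single window of k = alpha T slots in
   the middle of the horizon gains k(k-1)/2 + kN up to an exponentially small
   error.  This quadratic gap forces the adversary to spend its whole budget
   on a single user b.  Then moving probability alpha/(4N) from another user
   to b strictly lowers the BS's payoff once T is large, so no equilibrium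
   exists. *)

Section MeanAge.
Variable R : realType.

(* [mean_age w k] is the expected age in slot k when the age survives slot t
   (is not reset) with probability [w t]; for a user scheduled with
   probability p, [keep_prob (1 - p) ub] gives these survival probabilities,
   [ub t] telling whether the user is unblocked in slot t. *)
Fixpoint mean_age (w : nat -> R) (k : nat) : R :=
  if k is k'.+1 then 1 + w k' * mean_age w k' else 1.

Definition keep_prob (y : R) (ub : nat -> bool) (t : nat) : R :=
  if ub t then y else 1.

Definition free_age (y : R) (k : nat) : R := mean_age (fun=> y) k.

Lemma free_ageE y k : (1 - y) * free_age y k = 1 - y ^+ k.+1.
Proof.
elim: k => [|k IH]; first by rewrite /free_age /= mulr1 expr1.
rewrite [free_age y k.+1]/= -/(free_age y k) mulrDr mulr1 mulrCA IH !exprS.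
ring.
Qed.

Lemma expr_ge0_le1 (y : R) m : 0 <= y <= 1 -> 0 <= y ^+ m <= 1.
Proof. by case/andP=> y0 y1; rewrite exprn_ge0 //= exprn_ile1. Qed.

Definition nblocked (ub : nat -> bool) n := (\sum_(t < n) ~~ ub t)%N.

Lemma nblockedS ub n : nblocked ub n.+1 = (nblocked ub n + ~~ ub n)%N.
Proof. by rewrite /nblocked big_ord_recr. Qed.

Section Excess.
Variables (y : R) (ub : nat -> bool).
Hypotheses (y_ge0 : 0 <= y) (y_lt1 : y < 1).

Let y01 : 0 <= y <= 1. Proof. by rewrite y_ge0 ltW. Qed.
Let y_le1 : y <= 1. Proof. exact: ltW. Qed.
Let one_sub_y_gt0 : 0 < 1 - y. Proof. by rewrite subr_gt0. Qed.
Let one_sub_y_neq0 : 1 - y != 0. Proof. by rewrite gt_eqF. Qed.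

Definition excess_age n := mean_age (keep_prob y ub) n - free_age y n.

Lemma excess_age0 : excess_age 0 = 0.
Proof. by rewrite /excess_age /= subrr. Qed.

Lemma excess_ageS n : excess_age n.+1 =
  if ub n then y * excess_age n else excess_age n + (1 - y ^+ n.+1).
Proof.
rewrite /excess_age /= -free_ageE /keep_prob /free_age /=.
by case: (ub n); ring.
Qed.

Lemma excess_age_bounds n : 0 <= excess_age n <= (nblocked ub n)%:R.
Proof.
elim: n => [|n IH]; first by rewrite excess_age0 lexx ler0n.
rewrite excess_ageS nblockedS natrD; case/andP: IH => d0 dn.
have /andP[e0 e1] := expr_ge0_le1 n.+1 y01.
case: (ub n) => /=; last by apply/andP; split; lra.
rewrite /= addr0 mulr_ge0 //=; apply: le_trans dn; rewrite ler_piMl //; lra.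
Qed.

(* A telescoping device: it only changes at blocked slots. *)
Definition age_potential n :=
  \sum_(k < n) excess_age k + excess_age n / (1 - y).

Lemma age_potential0 : age_potential 0 = 0.
Proof. by rewrite /age_potential big_ord0 excess_age0 mul0r addr0. Qed.

Lemma age_potentialS n : age_potential n.+1 =
  age_potential n + (if ub n then 0 else excess_age n + free_age y n).
Proof.
rewrite /age_potential big_ord_recr /= excess_ageS.
have := free_ageE y n; case: (ub n) => /= Z; last by rewrite -Z; field.
by field.
Qed.

Lemma age_potential_le n (c := (nblocked ub n)%:R) :
  age_potential n * 2 <= c * 2 / (1 - y) + c * (c - 1).
Proof.
rewrite {}/c; elim: n => [|n IH].
  by rewrite age_potential0 /nblocked big_ord0 !mul0r add0r.
rewrite age_potentialS nblockedS natrD; case: (ub n) => /=.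
  by rewrite addr0 addr0.
have /andP[_ dn] := excess_age_bounds n.
have Zn : free_age y n <= 1 / (1 - y).
  rewrite ler_pdivlMr // mulrC free_ageE.
  by have /andP[] := expr_ge0_le1 n.+1 y01; lra.
move: IH dn; set c' := (nblocked ub n)%:R => IH dn.
have -> : (c' + 1) * 2 / (1 - y) + (c' + 1) * (c' + 1 - 1) =
   c' * 2 / (1 - y) + c' * (c' - 1) + 2 * (1 / (1 - y)) + 2 * c' by field.
lra.
Qed.

Lemma sum_excess_age_le n (c := (nblocked ub n)%:R) :
  (\sum_(k < n) excess_age k) * 2 <= c * 2 / (1 - y) + c * (c - 1).
Proof.
have := age_potential_le n; have /andP[d0 _] := excess_age_bounds n.
have : 0 <= excess_age n / (1 - y) by rewrite divr_ge0 // ltW.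
rewrite /age_potential /=; lra.
Qed.

Lemma excess_age_unblocked m j : (forall t, (m <= t < m + j)%N -> ub t) ->
  excess_age (m + j) = y ^+ j * excess_age m /\
  age_potential (m + j) = age_potential m.
Proof.
elim: j => [|j IH] unb; first by rewrite addn0 mul1r.
case: IH => [t /andP[mt tj]|IHd IHp]; first by rewrite unb // mt addnS ltnS ltnW.
rewrite addnS excess_ageS age_potentialS unb ?leq_addr ?addnS //= IHd IHp.
by rewrite addr0 exprS mulrA.
Qed.

Lemma excess_age_blocked m i : excess_age m = 0 ->
  (forall t, (m <= t < m + i)%N -> ~~ ub t) ->
  (1 - y) * excess_age (m + i) = i%:R * (1 - y) - y ^+ m.+1 * (1 - y ^+ i).
Proof.
move=> d0; elim: i => [|i IH] blk; first by rewrite addn0 d0 expr0 subrr !(mulr0, mul0r) subrr.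
have /negbTE blk_mi : ~~ ub (m + i) by rewrite blk // leq_addr addnS /=.
rewrite addnS excess_ageS blk_mi mulrDr IH => [|t /andP[mt ti]]; last first.
  by rewrite blk // mt addnS ltnS ltnW.
by rewrite -addSn exprD !exprSr -natr1; ring.
Qed.

Lemma age_potential_blocked m i (e := y ^+ m.+1) : excess_age m = 0 ->
  (forall t, (m <= t < m + i)%N -> ~~ ub t) ->
  i%:R * (i%:R - 1) + i%:R * 2 * (1 - 2 * e) / (1 - y) <=
    (age_potential (m + i) - age_potential m) * 2.
Proof.
move=> d0; elim: i => [|i IH] blk; first by rewrite addn0 subrr !mul0r add0r.
have blk' t : (m <= t < m + i)%N -> ~~ ub t.
  by case/andP=> mt ti; rewrite blk // mt addnS ltnS ltnW.
have /negbTE blk_mi : ~~ ub (m + i) by rewrite blk // leq_addr addnS /=.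
have e0 : 0 <= e by rewrite exprn_ge0.
have /andP[yi0 yi1] := expr_ge0_le1 i y01.
have excess_ge : i%:R - e / (1 - y) <= excess_age (m + i).
  rewrite -(ler_pM2l one_sub_y_gt0) excess_age_blocked // -/e mulrBr.
  have -> : (1 - y) * (e / (1 - y)) = e by field.
  suff : 0 <= e * y ^+ i by lra.
  exact: mulr_ge0.
have free_ge : (1 - e) / (1 - y) <= free_age y (m + i).
  rewrite ler_pdivrMr // mulrC free_ageE lerD2l lerN2 -addSn exprD -/e.
  by rewrite ler_piMr.
have := IH blk'; rewrite addnS age_potentialS blk_mi -natr1.
set w := (1 - y)^-1 in excess_ge free_ge *.
lra.
Qed.

(* The excess vanishes before the window, grows linearly inside it, and has
   decayed by the factor y^(M-s-K) <= e at the horizon M. *)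
Lemma sum_excess_age_window s K M (e := y ^+ s.+1) :
  (s + K <= M)%N -> (s.+1 <= M - s - K)%N ->
  (forall t, (t < M)%N -> ub t = ~~ (s <= t < s + K)%N) ->
  K%:R * (K%:R - 1) + K%:R * 2 / (1 - y) - K%:R * 6 * e / (1 - y) <=
    (\sum_(k < M) excess_age k) * 2.
Proof.
move=> sKM sM ubE.
have [d_s P_s] : excess_age s = 0 /\ age_potential s = 0.
  have [] := @excess_age_unblocked 0 s => [t /andP[_ ts]|->->].
    by rewrite ubE ?negb_and -?ltnNge ?ts //; lia.
  by rewrite excess_age0 mulr0 age_potential0.
have blk t : (s <= t < s + K)%N -> ~~ ub t.
  by case/andP=> st tK; rewrite ubE ?st ?tK //; lia.
have P_K := age_potential_blocked d_s blk.
rewrite P_s subr0 -/e in P_K.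
have d_K := excess_age_blocked d_s blk.
have [d_M P_M] : excess_age M = y ^+ (M - s - K) * excess_age (s + K) /\
    age_potential M = age_potential (s + K).
  have := @excess_age_unblocked (s + K) (M - s - K).
  rewrite -subnDA subnKC //; apply=> t /andP[st tM].
  by rewrite ubE ?negb_and -?ltnNge ?st ?orbT //; lia.
have e0 : 0 <= e by rewrite exprn_ge0.
have eK : 0 <= e * (1 - y ^+ K).
  by have /andP[_ ?] := expr_ge0_le1 K y01; rewrite mulr_ge0 ?subr_ge0.
have dK0 : 0 <= excess_age (s + K) by have /andP[] := excess_age_bounds (s + K).
have dK : excess_age (s + K) <= K%:R.
  by rewrite -(ler_pM2l one_sub_y_gt0) d_K -/e; lra.
have d_Me : excess_age M <= K%:R * e.
  rewrite d_M mulrC ler_pM // ?exprn_ge0 // /e ler_wiXn2l //; lia.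
have -> : \sum_(k < M) excess_age k = age_potential M - excess_age M / (1 - y).
  by rewrite /age_potential addrK.
rewrite P_M.
have : excess_age M / (1 - y) <= K%:R * e / (1 - y) by rewrite ler_pM2r ?invr_gt0.
set w := (1 - y)^-1 in P_K *.
lra.
Qed.

End Excess.
End MeanAge.

Section Convexity.
Variables (R : realType) (ub : nat -> bool).

Local Notation age y k := (mean_age (keep_prob y ub) k).

Lemma mean_age_ge1 (y : R) k : 0 <= y -> 1 <= age y k.
Proof.
move=> y0; elim: k => [|k IH] /=; first exact: lexx.
by rewrite lerDl /keep_prob; case: (ub k); apply: mulr_ge0 => //; lra.
Qed.

Lemma mean_age_le (a b : R) k : 0 <= a -> a <= b -> age a k <= age b k.
Proof.
move=> a0 ab; elim: k => [|k IH] /=; first exact: lexx.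
rewrite lerD2l /keep_prob; case: (ub k); last by rewrite !mul1r.
have a1 := mean_age_ge1 k a0.
by apply: (le_trans (ler_wpM2l a0 IH)); apply: ler_wpM2r => //; lra.
Qed.

Lemma mean_age_lt (a b : R) k : 0 <= a -> a < b -> (nblocked ub k < k)%N ->
  age a k < age b k.
Proof.
move=> a0 ab; elim: k => [|k IH] /=; first by [].
rewrite nblockedS ltrD2l /keep_prob; case: (ub k) => /= [_|]; last first.
  by rewrite !mul1r addn1 ltnS; apply: IH.
have := mean_age_ge1 k a0; have := mean_age_le k a0 (ltW ab).
move=> le_ab a1.
by apply: (le_lt_trans (ler_wpM2l a0 le_ab)); rewrite ltr_pM2r //; lra.
Qed.

Lemma mean_age_sorted (a b : R) k : 0 <= a -> 0 <= b ->
  0 <= (a - b) * (age a k - age b k).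
Proof.
move=> a0 b0; case: (leP a b) => ab.
  by rewrite mulr_le0 // subr_le0 ?mean_age_le.
by rewrite mulr_ge0 // subr_ge0 ?mean_age_le // ltW.
Qed.

Lemma mean_age_sorted_lt (a b : R) k : 0 <= a -> 0 <= b -> a != b ->
  (nblocked ub k < k)%N -> 0 < (a - b) * (age a k - age b k).
Proof.
move=> a0 b0 /lt_total/orP[] ab lt_k.
  by rewrite nmulr_rgt0 ?subr_lt0 ?mean_age_lt.
by rewrite mulr_gt0 // subr_gt0 ?mean_age_lt.
Qed.

Lemma mean_age_midpoint_le (a b : R) k : 0 <= a -> 0 <= b ->
  age ((a + b) / 2) k * 2 <= age a k + age b k.
Proof.
move=> a0 b0; elim: k => [|k IH] /=; first by lra.
rewrite /keep_prob; case: (ub k); last by rewrite !mul1r; lra.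
have := mean_age_sorted k a0 b0.
move: IH; set Sm := age _ k; set Sa := age a k; set Sb := age b k => IH C.
have : 0 <= (a + b) * (Sa + Sb - Sm * 2) by apply: mulr_ge0; lra.
lra.
Qed.

Lemma mean_age_midpoint_lt (a b : R) k : 0 <= a -> 0 <= b -> a != b ->
  (nblocked ub k + 2 <= k)%N ->
  age ((a + b) / 2) k * 2 < age a k + age b k.
Proof.
move=> a0 b0 ab; elim: k => [|k IH]; first by rewrite addn2.
rewrite nblockedS /= /keep_prob; case: (ub k) => /= lt_k; last first.
  have /IH : (nblocked ub k + 2 <= k)%N by lia.
  by rewrite !mul1r; lra.
have /(mean_age_sorted_lt a0 b0 ab) : (nblocked ub k < k)%N by lia.
have := mean_age_midpoint_le k a0 b0.
set Sm := age _ k; set Sa := age a k; set Sb := age b k => IH' C.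
have : 0 <= (a + b) * (Sa + Sb - Sm * 2) by apply: mulr_ge0; lra.
lra.
Qed.

End Convexity.

Lemma mean_age_sum_prod (R : realType) (w : nat -> R) k :
  mean_age w k = \sum_(j < k.+1) \prod_(t < k | (k - j <= t)%N) w t.
Proof.
elim: k => [|k IH]; first by rewrite big_ord_recl !big_ord0 addr0.
rewrite [LHS]/= IH [RHS]big_ord_recl [X in _ = X + _]big1 => [|t]; last first.
  by rewrite subn0 leqNgt ltn_ord.
congr (_ + _); rewrite mulr_sumr; apply: eq_bigr => j _.
rewrite lift0 subSS [RHS]big_mkcond big_ord_recr /= leq_subr mulrC.
by rewrite -big_mkcond.
Qed.

Section ExpectedAge.
Variables (R : realType) (N T : nat).

Definition pattern_of (r : 'I_T -> bool) (t : nat) : bool :=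
  if insub t is Some t' then r t' else false.

Lemma pattern_ofE r (t : 'I_T) : pattern_of r t = r t.
Proof. by rewrite /pattern_of valK. Qed.

Lemma resetE (sig : 'M[bool]_(N, T)) sch i (t : 'I_T) :
  reset sig sch i t = (sch t == i) && sig i t.
Proof. by rewrite /reset valK. Qed.

Lemma age_natr (sig : 'M[bool]_(N, T)) sch i k :
  (age sig sch i k)%:R = mean_age (fun t => (~~ reset sig sch i t : nat)%:R : R) k.
Proof.
elim: k => [|k IH] //=; case: (reset sig sch i k) => /=.
  by rewrite mul0r addr0.
by rewrite mul1r -IH -natr1 addrC.
Qed.

Lemma pmf_not_reset (p : 'I_N -> R) i (b : bool) : is_pmf p ->
  \sum_(n < N) p n * (~~ ((n == i) && b) : nat)%:R = if b then 1 - p i else 1.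
Proof.
case=> _ p1; case: b.
  rewrite -[in RHS]p1 (bigD1 i) //= [X in _ = X - _](bigD1 i) //=.
  rewrite eqxx mulr0 add0r addrAC subrr add0r.
  by apply: eq_bigr => n /negbTE ->; rewrite mulr1.
by rewrite -[RHS]p1; apply: eq_bigr => n _; rewrite andbF mulr1.
Qed.

Lemma exp_ageE (p : 'I_N -> R) (sig : 'M[bool]_(N, T)) i k :
  is_pmf p -> (k <= T)%N ->
  exp_age p sig i k = mean_age (keep_prob (1 - p i) (pattern_of (sig i))) k.
Proof.
move=> pmf_p kT; rewrite /exp_age mean_age_sum_prod.
under eq_bigr => sch _ do rewrite age_natr mean_age_sum_prod mulr_sumr.
rewrite exchange_big /=; apply: eq_bigr => j _.
have window (F : nat -> R) : \prod_(t < k | (k - j <= t)%N) F t =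
    \prod_(t < T) (if (k - j <= t < k)%N then F t else 1).
  by rewrite (big_ord_widen_cond _ _ _ kT) big_mkcond.
rewrite window.
under eq_bigr => sch _ do
  rewrite (window (fun t => (~~ reset sig sch i t : nat)%:R)) /sched_prob -big_split /=.
under eq_bigr => sch _ do under eq_bigr => t _ do rewrite resetE.
(* Slots are scheduled independently: the expectation of the product over the
   window factorises. *)
rewrite -(bigA_distr_bigA (fun (t : 'I_T) (n : 'I_N) => p n *
  (if (k - j <= t < k)%N then (~~ ((n == i) && sig i t) : nat)%:R else 1))) /=.
apply: eq_bigr => t _; rewrite /keep_prob pattern_ofE.
case: ifP => _; first by rewrite pmf_not_reset.
by under eq_bigr => n _ do rewrite mulr1; case: pmf_p.
Qed.

Definition total_age (y : R) (r : 'I_T -> bool) : R :=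
  \sum_(k < T) mean_age (keep_prob y (pattern_of r)) k.

Definition free_total_age (y : R) : R := \sum_(k < T) free_age y k.

Lemma payoffE (p : 'I_N -> R) (sig : 'M[bool]_(N, T)) : is_pmf p ->
  payoff p sig = (T%:R^-1 * N%:R^-1) * \sum_(i < N) total_age (1 - p i) (sig i).
Proof.
move=> pmf_p; rewrite /payoff -mulrA -mulr_sumr exchange_big /=.
congr (_ * (_ * _)); apply: eq_bigr => i _; apply: eq_bigr => t _.
by rewrite exp_ageE // ltnW.
Qed.

Lemma eq_mean_age (w1 w2 : nat -> R) k :
  (forall t, (t < k)%N -> w1 t = w2 t) -> mean_age w1 k = mean_age w2 k.
Proof.
elim: k => [|k IH] //= w12; rewrite w12 // IH // => t tk.
by rewrite w12 // ltnW.
Qed.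

Lemma eq_total_age y (r1 r2 : 'I_T -> bool) : r1 =1 r2 ->
  total_age y r1 = total_age y r2.
Proof.
move=> r12; apply: eq_bigr => k _; apply: eq_mean_age => t _.
by rewrite /keep_prob /pattern_of; case: insub => // t'; rewrite r12.
Qed.

Lemma total_age_unblocked y (r : 'I_T -> bool) : (forall t, r t) ->
  total_age y r = free_total_age y.
Proof.
move=> unb; apply: eq_bigr => k _; apply: eq_mean_age => t tk.
have tT : (t < T)%N by apply: ltn_trans tk _.
by rewrite /keep_prob /pattern_of insubT unb.
Qed.

Lemma total_age_sub_free y r :
  total_age y r - free_total_age y = \sum_(k < T) excess_age y (pattern_of r) k.
Proof. by rewrite -sumrB. Qed.

Lemma nblocked_pattern (r : 'I_T -> bool) :
  nblocked (pattern_of r) T = (\sum_(t < T) ~~ r t)%N.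
Proof. by apply: eq_bigr => t _; rewrite pattern_ofE. Qed.

Lemma total_age_midpoint_le (a b : R) r : 0 <= a -> 0 <= b ->
  total_age ((a + b) / 2) r * 2 <= total_age a r + total_age b r.
Proof.
move=> a0 b0; rewrite /total_age mulr_suml -big_split /=.
by apply: ler_sum => k _; apply: mean_age_midpoint_le.
Qed.

Lemma total_age_midpoint_lt (a b : R) r : 0 <= a -> 0 <= b -> a != b ->
  (nblocked (pattern_of r) T.-1 + 2 <= T.-1)%N ->
  total_age ((a + b) / 2) r * 2 < total_age a r + total_age b r.
Proof.
move=> a0 b0 ab lt_T; have T_gt0 : (0 < T)%N by lia.
rewrite /total_age mulr_suml -big_split /= -(prednK T_gt0) !big_ord_recr /=.
apply: ler_ltD; last exact: mean_age_midpoint_lt.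
by apply: ler_sum => k _; apply: mean_age_midpoint_le.
Qed.

Section FreeTotalAge.
Variable y : R.
Hypotheses (y_ge0 : 0 <= y) (y_lt1 : y < 1).
Let y01 : 0 <= y <= 1. Proof. by rewrite y_ge0 ltW. Qed.

Lemma free_total_ageE :
  (1 - y) * free_total_age y = T%:R - y * (1 - y ^+ T) / (1 - y).
Proof.
rewrite mulr_sumr; under eq_bigr => k _ do rewrite free_ageE.
rewrite sumrB sumr_const card_ord.
rewrite -mulr_natl mulr1; congr (_ - _).
have -> : 1 - y ^+ T = (1 - y) * \sum_(k < T) y ^+ k by rewrite -opprB subrX1; ring.
have y1 : 1 - y != 0 by rewrite subr_eq0 eq_sym lt_eqF.
rewrite [RHS](_ : _ = y * \sum_(k < T) y ^+ k); last by field.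
by rewrite mulr_sumr; apply: eq_bigr => k _; rewrite exprS.
Qed.

Lemma free_total_age_le : free_total_age y <= T%:R / (1 - y).
Proof.
have /andP[_ yT1] := expr_ge0_le1 T y01.
rewrite ler_pdivlMr ?subr_gt0 // mulrC free_total_ageE gerBl.
by rewrite divr_ge0 ?mulr_ge0 // subr_ge0 // ltW.
Qed.

Lemma free_total_age_ge : (T%:R - (1 - y)^-1) / (1 - y) <= free_total_age y.
Proof.
have /andP[yT0 yT1] := expr_ge0_le1 T y01.
rewrite ler_pdivrMr ?subr_gt0 // mulrC free_total_ageE lerB //.
rewrite -[X in _ <= X]mul1r ler_pM2r ?invr_gt0 ?subr_gt0 //.
by rewrite mulr_ile1 // ?subr_ge0 ?gerBl // ltW.
Qed.

End FreeTotalAge.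

End ExpectedAge.

Section Strategies.
Variables (R : realType) (N T : nat) (alpha : R).

Lemma pmf_perm (s : 'S_N) (p : 'I_N -> R) :
  is_pmf p -> is_pmf (fun l => p (s l)).
Proof.
case=> p0 p1; split=> //; rewrite -p1.
by rewrite [RHS](reindex_inj (@perm_inj _ s)).
Qed.

Lemma pmf_midpoint (p q : 'I_N -> R) :
  is_pmf p -> is_pmf q -> is_pmf (fun l => (p l + q l) / 2).
Proof.
case=> p0 p1 [q0 q1]; split=> [l|]; first by rewrite divr_ge0 ?addr_ge0.
by rewrite -mulr_suml big_split /= p1 q1; field.
Qed.

Lemma feasible_row_perm (s : 'S_N) (sig : 'M[bool]_(N, T)) :
  feasible alpha sig -> feasible alpha (row_perm s sig).
Proof.
case=> budget one_per_slot; split.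
  apply: le_trans budget; rewrite ler_nat [leqRHS](reindex_inj (@perm_inj _ s)).
  by apply: leq_sum => l _; apply: leq_sum => t _; rewrite mxE.
move=> t; have -> : [set l | ~~ row_perm s sig l t] = s @^-1: [set l | ~~ sig l t].
  by apply/setP => l; rewrite !inE mxE.
by rewrite card_preimset //; exact: perm_inj.
Qed.

Lemma payoff_perm (s : 'S_N) (p : 'I_N -> R) (sig : 'M[bool]_(N, T)) :
  is_pmf p -> payoff (fun l => p (s l)) sig = payoff p (row_perm s^-1 sig).
Proof.
move=> pmf_p; rewrite !payoffE //; last exact: pmf_perm.
congr (_ * _).
rewrite [RHS](reindex_inj (@perm_inj _ s)); apply: eq_bigr => l _.
by apply: eq_total_age => t; rewrite mxE permK.
Qed.

Lemma pmf_le1 (p : 'I_N -> R) i : is_pmf p -> p i <= 1.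
Proof.
by case=> p0 <-; rewrite (bigD1 i) //= lerDl sumr_ge0.
Qed.

Lemma payoff_midpoint_lt (p q : 'I_N -> R) (sig : 'M[bool]_(N, T)) i :
  is_pmf p -> is_pmf q -> p i != q i ->
  (nblocked (pattern_of (sig i)) T.-1 + 2 <= T.-1)%N ->
  payoff (fun l => (p l + q l) / 2) sig * 2 < payoff p sig + payoff q sig.
Proof.
move=> pmf_p pmf_q pq_i lt_T.
rewrite !payoffE //; last exact: pmf_midpoint.
set c := T%:R^-1 * N%:R^-1.
have c_gt0 : 0 < c.
  by rewrite mulr_gt0 // invr_gt0 ltr0n; [lia | case: i {pq_i lt_T} => /= i; lia].
rewrite -mulrA -mulrDr ltr_pM2l // mulr_suml -big_split /=.
rewrite (bigD1 i) //= [X in _ < X](bigD1 i) //=.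
have mid l : 1 - (p l + q l) / 2 = ((1 - p l) + (1 - q l)) / 2 by field.
have ge0 (r : 'I_N -> R) l : is_pmf r -> 0 <= 1 - r l.
  by move=> pmf_r; rewrite subr_ge0 pmf_le1.
apply: ltr_leD; rewrite ?mid.
  by apply: total_age_midpoint_lt; rewrite ?ge0 // (inj_eq (addrI 1)) (inj_eq oppr_inj).
by apply: ler_sum => l _; rewrite mid total_age_midpoint_le ?ge0.
Qed.

Lemma feasible_row_nblocked (sig : 'M[bool]_(N, T)) k l :
  alpha * T%:R = k%:R -> feasible alpha sig -> (\sum_(t < T) ~~ sig l t <= k)%N.
Proof.
move=> alphaT [budget _]; rewrite alphaT ler_nat in budget.
by apply: leq_trans budget; rewrite (bigD1 l) //= leq_addr.
Qed.

Lemma feasible_unblocked (sig : 'M[bool]_(N, T)) k l :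
  alpha * T%:R = k%:R -> (k + 3 <= T)%N -> feasible alpha sig ->
  (nblocked (pattern_of (sig l)) T.-1 + 2 <= T.-1)%N.
Proof.
move=> alphaT kT feas; have := feasible_row_nblocked l alphaT feas.
have T_gt0 : (0 < T)%N by lia.
have : nblocked (pattern_of (sig l)) T =
    (nblocked (pattern_of (sig l)) T.-1 + ~~ pattern_of (sig l) T.-1)%N.
  by rewrite -nblockedS prednK.
rewrite nblocked_pattern; lia.
Qed.

Lemma nash_eq_uniform (pb : 'I_N -> R) (sb : 'M[bool]_(N, T)) k :
  alpha * T%:R = k%:R -> (k + 3 <= T)%N -> nash_eq alpha pb sb ->
  forall l, pb l = N%:R^-1.
Proof.
move=> alphaT kT [pmf_pb [feas [bs_best adv_best]]].
(* If pb i != pb j, the swapped pmf is as good as pb against the best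
   response sb, and by strict convexity their midpoint is strictly better. *)
have pb_const i j : pb i = pb j.
  apply/eqP; apply: contraT => pb_ij.
  have pmf_pt := pmf_perm (tperm i j) pmf_pb.
  have bs := bs_best _ (pmf_midpoint pmf_pb pmf_pt).
  have := adv_best _ (feasible_row_perm (tperm i j)^-1 feas).
  rewrite -payoff_perm // => adv.
  have := payoff_midpoint_lt pmf_pb pmf_pt (_ : pb i != pb (tperm i j i)).
  rewrite tpermL => /(_ sb pb_ij (feasible_unblocked i alphaT kT feas)).
  lra.
move=> l; have [_ p1] := pmf_pb.
have N_neq0 : N%:R != 0 :> R by rewrite pnatr_eq0 -lt0n; case: l => /= l'; lia.
have : \sum_(i < N) pb i = N%:R * pb l.
  by rewrite (eq_bigr (fun=> pb l)) ?sumr_const ?card_ord ?mulr_natl // => i _.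
rewrite p1 => /esym p1'.
by apply: (mulfI N_neq0); rewrite p1' mulfV.
Qed.

Definition move_mass (p : 'I_N -> R) b c h : 'I_N -> R :=
  fun l => if l == b then p l + h else if l == c then p l - h else p l.

Lemma pmf_move_mass (p : 'I_N -> R) b c h : is_pmf p -> b != c ->
  0 <= h <= p c -> is_pmf (move_mass p b c h).
Proof.
case=> p0 p1 bc /andP[h0 hc]; split=> [l|].
  rewrite /move_mass; case: (l == b); first exact: addr_ge0.
  by case: eqP => [->|_]; rewrite ?subr_ge0.
rewrite -p1 (bigD1 b) //= [RHS](bigD1 b) //= (bigD1 c) 1?eq_sym //=.
rewrite [X in _ = _ + X](bigD1 c) 1?eq_sym //=.
have cb : c != b by rewrite eq_sym.
rewrite /move_mass eqxx (negbTE cb) eqxx (eq_bigr p); first by ring.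
by move=> l /andP[/negbTE -> /negbTE ->].
Qed.

Lemma payoff_move_mass (p : 'I_N -> R) (sig : 'M[bool]_(N, T)) b c h :
  is_pmf p -> b != c -> 0 <= h <= p c ->
  payoff (move_mass p b c h) sig - payoff p sig = T%:R^-1 * N%:R^-1 *
    (total_age (1 - p b - h) (sig b) - total_age (1 - p b) (sig b) +
     (total_age (1 - p c + h) (sig c) - total_age (1 - p c) (sig c))).
Proof.
move=> pmf_p bc hc; rewrite !payoffE //; last exact: pmf_move_mass.
rewrite -mulrBr; congr (_ * _).
rewrite -sumrB (bigD1 b) //= (bigD1 c) 1?eq_sym //= big1 ?addr0.
  have cb : c != b by rewrite eq_sym.
  rewrite /move_mass eqxx (negbTE cb) eqxx.
  have -> : 1 - (p b + h) = 1 - p b - h by ring.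
  by have -> : 1 - (p c - h) = 1 - p c + h by ring.
by move=> l /andP[lb lc]; rewrite /move_mass (negbTE lb) (negbTE lc) subrr.
Qed.

End Strategies.

Lemma natr_mul_pred (R : realType) (m : nat) :
  (m * m.-1)%:R = m%:R * (m%:R - 1) :> R.
Proof. by case: m => [|m]; rewrite ?mul0r // natrM -natr1 addrK. Qed.

Lemma sum_concentrated (I : finType) (K : I -> nat) k :
  (\sum_i K i <= k)%N -> (k * (k - 2) < \sum_i K i * (K i).-1)%N ->
  exists b, K b = k /\ forall l, l != b -> K l = 0%N.
Proof.
move=> sumK sqK; have [b kb] : exists b, (k <= K b)%N.
  case: (pickP (fun i => k <= K i)%N) => [b kb|small]; first by exists b.
  have : (\sum_i K i * (K i).-1 <= (\sum_i K i) * (k - 2))%N.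
    rewrite big_distrl leq_sum // => i _; rewrite leq_mul2l.
    by have := small i; rewrite /= leqNgt => /negbFE; lia.
  by have := leq_mul sumK (leqnn (k - 2)); lia.
have := sumK; rewrite (bigD1 b) //= => sumK'.
exists b; split=> [|l lb]; first by lia.
have : (\sum_(i | i != b) K i == 0)%N by lia.
by rewrite sum_nat_eq0 => /forallP/(_ l); rewrite lb => /eqP.
Qed.

Lemma decay_linear_le (R : realType) (n : R) m : 1 <= n ->
  (1 - n^-1) ^+ m * (n - 1 + m%:R) <= n - 1.
Proof.
move=> n_ge1; have n_gt0 : 0 < n by lra.
have q01 : 0 <= 1 - n^-1 <= 1.
  by rewrite subr_ge0 invf_le1 // n_ge1 gerBl invr_ge0 ltW.
have /andP[q0 _] := q01.
elim: m => [|m IH]; first by rewrite expr0 mul1r addr0.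
have /andP[_ qm1] := expr_ge0_le1 m q01.
rewrite exprS -mulrA -natr1 addrA mulrDr mulr1.
apply: (le_trans (ler_wpM2l q0 (lerD IH qm1))).
by rewrite subrK mulrBl mul1r mulVf ?gt_eqF.
Qed.

Section Window.
Variables (R : realType) (N T : nat).

Definition window_mx (l0 : 'I_N) s k : 'M[bool]_(N, T) :=
  \matrix_(l, t) ~~ ((l == l0) && (s <= t < s + k)%N).

Lemma count_window s k : (s + k <= T)%N ->
  (\sum_(t < T) (s <= t < s + k)%N)%N = k.
Proof.
move=> skT; rewrite -(big_mkord xpredT (fun t => (s <= t < s + k)%N : nat)).
rewrite (@big_cat_nat _ _ _ s 0 T) /=; [|lia|lia].
rewrite (@big_cat_nat _ _ _ (s + k) s T) /=; [|lia|lia].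
rewrite big_nat_cond big1 ?add0n => [|t /andP[/andP[_ ts] _]]; last by rewrite leqNgt ts.
rewrite addnC big_nat_cond big1 ?add0n => [|t /andP[/andP[skt _] _]]; last first.
  by rewrite ltnNge skt andbF.
rewrite big_nat_cond (eq_bigr (fun=> 1%N)) => [|t /andP[/andP[-> ->] _]] //.
by rewrite -big_nat_cond sum_nat_const_nat; lia.
Qed.

Lemma feasible_window_mx (alpha : R) l0 s k :
  alpha * T%:R = k%:R -> (s + k <= T)%N -> feasible alpha (window_mx l0 s k).
Proof.
move=> alphaT skT; split.
  rewrite alphaT ler_nat (bigD1 l0) //= [X in (_ + X)%N]big1 => [|l /negbTE l_l0].
    rewrite addn0 -{2}(count_window skT).
    by apply: leq_sum => t _; rewrite mxE eqxx negbK.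
  by rewrite big1 // => t _; rewrite mxE l_l0.
move=> t; rewrite -(cards1 l0) subset_leq_card //.
by apply/subsetP => l; rewrite !inE mxE negbK => /andP[].
Qed.

Lemma total_age_excess_le (y : R) r (c := (\sum_(t < T) ~~ r t)%N%:R : R) :
  0 <= y -> y < 1 ->
  (total_age y r - free_total_age T y) * 2 <= c * 2 / (1 - y) + c * (c - 1).
Proof.
move=> y0 y1; rewrite {}/c total_age_sub_free -nblocked_pattern.
exact: sum_excess_age_le.
Qed.

Lemma total_age_window_ge (y : R) s k : 0 <= y -> y < 1 ->
  (s + k <= T)%N -> (s.+1 <= T - s - k)%N ->
  k%:R * (k%:R - 1) + k%:R * 2 / (1 - y) - k%:R * 6 * y ^+ s.+1 / (1 - y) <=
    (total_age y (fun t : 'I_T => ~~ (s <= t < s + k)%N) - free_total_age T y) * 2.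
Proof.
move=> y0 y1 skT sT; rewrite total_age_sub_free.
by apply: sum_excess_age_window => // t tT; rewrite /pattern_of insubT.
Qed.

End Window.

(* For t = T and a t = k, the difference of the two sides bounds the change in
   the BS's total age when it moves mass a/(4n) onto the blocked user. *)
Lemma deviation_gain (R : realType) (n t a e : R) : 2 <= n -> 0 < a -> a < 1 ->
  200 * n ^+ 2 < a ^+ 2 * (1 - a) * t -> 0 <= e -> e * ((1 - a) * t) <= 2 * n ->
  (t + a * t) / (n^-1 + a / (4 * n)) + t / (n^-1 - a / (4 * n)) +
    3 * (a * t) * n * e + 2 * n ^+ 2 < a * t * n + 2 * (n * t).
Proof.
move=> n2 a0 a1 t_large e0 e_le.
have n0 : 0 < n by lra.
have a2 : 0 < a ^+ 2 by rewrite exprn_gt0.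
have n2_gt0 : 0 < n ^+ 2 by rewrite exprn_gt0.
have t0 : 0 < t.
  have a2a : 0 < a ^+ 2 * (1 - a) by rewrite mulr_gt0 // subr_gt0.
  by rewrite -(pmulr_rgt0 _ a2a) (lt_trans _ t_large) // mulr_gt0.
have a16 : 0 < 16 - a ^+ 2 by rewrite expr2; nra.
have -> : (t + a * t) / (n^-1 + a / (4 * n)) + t / (n^-1 - a / (4 * n)) =
    a * t * n + 2 * (n * t) - t * n * a ^+ 2 * (2 - a) / (16 - a ^+ 2).
  by field; rewrite ?gt_eqF //; nra.
suff : 3 * (a * t) * n * e + 2 * n ^+ 2 < t * n * a ^+ 2 / 16.
  have : t * n * a ^+ 2 / 16 <= t * n * a ^+ 2 * (2 - a) / (16 - a ^+ 2).
    have -> : t * n * a ^+ 2 * (2 - a) / (16 - a ^+ 2) = t * n * a ^+ 2 / 16 +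
        t * n * a ^+ 2 * (16 - 16 * a + a ^+ 2) / (16 * (16 - a ^+ 2)).
      by field; rewrite gt_eqF.
    rewrite lerDl divr_ge0 ?mulr_ge0 ?(ltW t0) ?(ltW n0) ?(ltW a2) //; nra.
  lra.
rewrite -(ltr_pM2r (_ : 0 < 1 - a)) ?subr_gt0 //.
have : 3 * (a * t) * n * e * (1 - a) <= 6 * a * n ^+ 2.
  have -> : 3 * (a * t) * n * e * (1 - a) = 3 * a * n * (e * ((1 - a) * t)) by ring.
  rewrite expr2 (le_trans (ler_wpM2l _ e_le)) //; last lra.
  by rewrite !mulr_ge0 // ltW.
have : 25 * n ^+ 2 < t * n * a ^+ 2 / 16 * (1 - a).
  have -> : t * n * a ^+ 2 / 16 * (1 - a) = n / 16 * (a ^+ 2 * (1 - a) * t) by ring.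
  apply: le_lt_trans (_ : n / 16 * (200 * n ^+ 2) < _); last by rewrite ltr_pM2l ?divr_gt0.
  by rewrite expr2; nra.
have : 0 <= a * n ^+ 2 by rewrite mulr_ge0 ?ltW.
have : 0 <= (1 - a) * n ^+ 2 by rewrite mulr_ge0 ?subr_ge0 ?ltW.
lra.
Qed.

Section NoEquilibrium.
Variables (R : realType) (N T k : nat) (alpha : R).
Hypotheses (N_ge2 : (2 <= N)%N) (alpha_gt0 : 0 < alpha) (alpha_lt1 : alpha < 1).
Hypothesis alphaT : alpha * T%:R = k%:R.
Hypothesis T_large : 200 * N%:R ^+ 2 < alpha ^+ 2 * (1 - alpha) * T%:R.

Local Notation n := (N%:R : R).
Local Notation y := (1 - n^-1).

Lemma n_ge2 : 2 <= n. Proof. by rewrite ler_nat. Qed.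

Lemma n_gt0 : 0 < n. Proof. by have := n_ge2; lra. Qed.

Lemma keep_ge0 : 0 <= y.
Proof. by rewrite subr_ge0 invf_le1 ?n_gt0 //; have := n_ge2; lra. Qed.

Lemma keep_lt1 : y < 1.
Proof. by rewrite gtrBl invr_gt0 n_gt0. Qed.

Lemma large_budget : 200 * n ^+ 2 < alpha * T%:R /\ 200 * n ^+ 2 < (1 - alpha) * T%:R.
Proof.
have aT : 0 <= alpha * T%:R by rewrite mulr_ge0 // ltW.
have bT : 0 <= (1 - alpha) * T%:R by rewrite mulr_ge0 // subr_ge0 ltW.
split; apply: (lt_le_trans T_large).
  rewrite (_ : _ * T%:R = (alpha * (1 - alpha)) * (alpha * T%:R)); last by ring.
  by rewrite ler_piMl //; nra.
by rewrite -mulrA ler_piMl // expr_le1 // ltW.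
Qed.

Lemma budget_bounds : (2 <= k)%N /\ (k + 3 <= T)%N.
Proof.
have [ak bk] := large_budget; have n4 : 4 <= n ^+ 2 by rewrite expr2; have := n_ge2; nra.
rewrite -!(ler_nat R) natrD -alphaT; split; first lra.
by rewrite -[T%:R]mul1r -[X in _ <= X * _](subrK alpha) mulrDl; lra.
Qed.

(* The adversary's test strategy blocks one user during [s, s + k), centred
   in the horizon. *)
Local Notation s := (T - k).-1./2.
Local Notation e := (y ^+ s.+1).

Lemma window_fits :
  [/\ (s + k <= T)%N, (s.+1 <= T - s - k)%N & (T - k <= s.+1.*2)%N].
Proof.
have [_ kT] := budget_bounds; have := odd_double_half (T - k).-1.
by case: odd => /=; split; lia.
Qed.

Lemma decay_le : e * ((1 - alpha) * T%:R) <= 2 * n.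
Proof.
have [_ _ Tks] := window_fits; have [_ kT] := budget_bounds.
have n1 : 1 <= n by have := n_ge2; lra.
have := decay_linear_le s.+1 n1.
have e0 : 0 <= e by rewrite exprn_ge0 ?keep_ge0.
have : (1 - alpha) * T%:R <= 2 * s.+1%:R.
  rewrite mulrBl mul1r alphaT -natrB; last by lia.
  by rewrite -natrM ler_nat mul2n.
move=> /(ler_wpM2l e0); have : 0 <= e * (n - 1) by rewrite mulr_ge0 // subr_ge0.
lra.
Qed.

Lemma decay_lt : 6 * n * e < 1.
Proof.
have [_ bT] := large_budget; have n0 := n_gt0; rewrite expr2 in bT.
have : 6 * n * (e * ((1 - alpha) * T%:R)) <= 6 * n * (2 * n).
  by rewrite ler_wpM2l ?decay_le // mulr_ge0 // ltW.
have : 0 < n * n by rewrite mulr_gt0.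
rewrite -(ltr_pM2r (_ : 0 < (1 - alpha) * T%:R)) ?mul1r; last by nra.
nra.
Qed.

Lemma uniform_pmf : is_pmf (fun _ : 'I_N => n^-1).
Proof.
split=> [_|]; first by rewrite invr_ge0 ltW ?n_gt0.
by rewrite sumr_const card_ord -(mulr_natl n^-1 N) mulfV // gt_eqF ?n_gt0.
Qed.

Lemma inv_one_sub_keep : (1 - y)^-1 = n.
Proof. by rewrite opprB addrC subrK invrK. Qed.

Lemma uniform_payoff_le (sig sig' : 'M[bool]_(N, T)) :
  payoff (fun=> n^-1) sig <= payoff (fun=> n^-1) sig' ->
  \sum_l (total_age y (sig l) - free_total_age T y) <=
    \sum_l (total_age y (sig' l) - free_total_age T y).
Proof.
have [_ kT] := budget_bounds.
have c_gt0 : 0 < T%:R^-1 * N%:R^-1 :> R by rewrite mulr_gt0 ?invr_gt0 ?n_gt0 ?ltr0n //; lia.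
by rewrite !payoffE ?ler_pM2l ?sumrB ?lerD2r //; exact: uniform_pmf.
Qed.

Lemma adversary_window_ge (sb : 'M[bool]_(N, T)) :
  nash_eq alpha (fun=> n^-1) sb ->
  k%:R * (k%:R - 1) + k%:R * 2 * n - k%:R * 6 * e * n <=
    (\sum_l (total_age y (sb l) - free_total_age T y)) * 2.
Proof.
move=> [_ [_ [_ adv_best]]]; have [skT sT _] := window_fits.
pose l0 : 'I_N := Ordinal (leq_trans (isT : 0 < 2)%N N_ge2).
have /uniform_payoff_le := adv_best _ (feasible_window_mx l0 alphaT skT).
rewrite (bigD1 l0) //= big1 ?addr0 => [win_le|l /negbTE l_l0]; last first.
  by rewrite (total_age_unblocked _ (fun t => _)) ?subrr // => t; rewrite mxE l_l0.
apply: le_trans (ler_wpM2r _ win_le) => //.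
have := total_age_window_ge keep_ge0 keep_lt1 skT sT.
rewrite inv_one_sub_keep (eq_total_age _ (_ : _ =1 window_mx T l0 s k l0)) // => t.
by rewrite mxE eqxx.
Qed.

Lemma adversary_concentrates (sb : 'M[bool]_(N, T)) :
  nash_eq alpha (fun=> n^-1) sb ->
  exists b, (\sum_(t < T) ~~ sb b t)%N = k /\ forall l, l != b -> forall t, sb l t.
Proof.
move=> NE; have [k2 _] := budget_bounds; have [_ [feas _]] := NE.
pose K l := (\sum_(t < T) ~~ sb l t)%N.
have sumK : (\sum_l K l <= k)%N by case: feas; rewrite alphaT ler_nat.
have row_le l : (total_age y (sb l) - free_total_age T y) * 2 <=
    (K l)%:R * 2 * n + (K l)%:R * ((K l)%:R - 1).
  by have := total_age_excess_le (sb l) keep_ge0 keep_lt1; rewrite inv_one_sub_keep.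
have sum_le : (\sum_l (total_age y (sb l) - free_total_age T y)) * 2 <=
    (\sum_l K l)%N%:R * 2 * n + \sum_l (K l)%:R * ((K l)%:R - 1).
  rewrite mulr_suml natr_sum !mulr_suml -big_split; apply: ler_sum => l _; exact: row_le.
have ksum : (\sum_l K l)%N%:R * 2 * n <= k%:R * 2 * n.
  by rewrite !ler_pM2r ?n_gt0 // ler_nat.
have win := adversary_window_ge NE.
have k_pos : 0 < k%:R * (1 - 6 * n * e).
  by rewrite mulr_gt0 ?subr_gt0 ?decay_lt // ltr0n; lia.
have Qnat : \sum_l (K l)%:R * ((K l)%:R - 1) = (\sum_l K l * (K l).-1)%N%:R :> R.
  by rewrite natr_sum; apply: eq_bigr => l _; rewrite natr_mul_pred.
rewrite Qnat in sum_le.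
have : k%:R * (k%:R - 2) < (\sum_l K l * (K l).-1)%N%:R :> R by lra.
rewrite -natrB ?(leq_trans _ k2) // -natrM ltr_nat.
move=> /(sum_concentrated sumK) [b [Kb K0]].
exists b; split=> // l lb t; move/eqP: (K0 l lb); rewrite sum_nat_eq0.
by move=> /forallP/(_ t); case: (sb l t).
Qed.

Lemma blocked_row_ge (sb : 'M[bool]_(N, T)) b :
  nash_eq alpha (fun=> n^-1) sb -> (forall l, l != b -> forall t, sb l t) ->
  k%:R * (k%:R - 1) + k%:R * 2 * n - k%:R * 6 * e * n <=
    (total_age y (sb b) - free_total_age T y) * 2.
Proof.
move=> NE unb; have := adversary_window_ge NE.
rewrite (bigD1 b) //= big1 ?addr0 // => l lb.
by rewrite (total_age_unblocked _ (unb l lb)) subrr.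
Qed.

Local Notation h := (alpha / (4 * n)).

Lemma shift_bounds : [/\ 0 <= y - h, y - h < 1, 0 <= y + h & y + h < 1].
Proof.
have n2 := n_ge2; have n0 := n_gt0; have y1 := keep_lt1.
have h0 : 0 < h by rewrite divr_gt0 // mulr_gt0.
have hn : h * 4 < n^-1.
  rewrite (_ : h * 4 = alpha * n^-1); last by field; rewrite gt_eqF.
  by rewrite -[X in _ < X]mul1r ltr_pM2r ?invr_gt0.
have ninv : n^-1 * 2 <= 1.
  have : 0 <= (n - 2) * n^-1 by rewrite mulr_ge0 // ?subr_ge0 ?invr_ge0 // ltW.
  by rewrite mulrBl mulfV ?gt_eqF // subr_ge0 mulrC.
by split; lra.
Qed.

Lemma bs_move_mass_ge0 (sb : 'M[bool]_(N, T)) b c :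
  nash_eq alpha (fun=> n^-1) sb -> b != c -> (forall t, sb c t) ->
  0 <= total_age (y - h) (sb b) - total_age y (sb b) +
       (free_total_age T (y + h) - free_total_age T y).
Proof.
move=> [_ [_ [bs_best _]]] bc unb_c; have [_ _ _ yH1] := shift_bounds.
have hc : 0 <= h <= n^-1.
  by rewrite divr_ge0 ?mulr_ge0 ?ltW ?n_gt0 //=; lra.
have [_ kT] := budget_bounds.
have := bs_best _ (pmf_move_mass uniform_pmf bc hc).
rewrite -subr_ge0 payoff_move_mass //; last exact: uniform_pmf.
rewrite pmulr_rge0; last by rewrite mulr_gt0 ?invr_gt0 ?n_gt0 // ltr0n; lia.
by rewrite !(total_age_unblocked _ unb_c).
Qed.

Lemma uniform_nash_eq_false (sb : 'M[bool]_(N, T)) :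
  ~ nash_eq alpha (fun=> n^-1) sb.
Proof.
move=> NE; have [b [Kb unb]] := adversary_concentrates NE.
have [c cb] : exists c : 'I_N, c != b.
  pose i0 : 'I_N := Ordinal (ltnW N_ge2); pose i1 : 'I_N := Ordinal N_ge2.
  by case: (eqVneq i0 b) => [<-|]; [exists i1 | exists i0].
have [yh0 yh1 yH0 yH1] := shift_bounds.
have bc : b != c by rewrite eq_sym.
have := bs_move_mass_ge0 NE bc (unb c cb).
have := total_age_excess_le (sb b) yh0 yh1.
have := free_total_age_le T yh0 yh1.
have := free_total_age_le T yH0 yH1.
have := free_total_age_ge T keep_ge0 keep_lt1.
have := blocked_row_ge NE unb.
rewrite Kb inv_one_sub_keep !opprD !opprK !addrA subrr !add0r.
have := deviation_gain n_ge2 alpha_gt0 alpha_lt1 T_large (exprn_ge0 _ keep_ge0) decay_le.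
rewrite alphaT; lra.
Qed.

End NoEquilibrium.

Unset Implicit Arguments.

Theorem theorem6 (R : realType) (N : nat) (alpha : R) :
  (2 <= N)%N -> 0 < alpha -> alpha < 1 ->
  exists T0 : nat, forall T : nat, (T0 <= T)%N ->
    (exists k : nat, alpha * T%:R = k%:R) ->
    ~ exists (pb : 'I_N -> R) (sb : 'M[bool]_(N, T)), nash_eq alpha pb sb.
Proof.
move=> N_ge2 alpha_gt0 alpha_lt1.
have c_gt0 : 0 < alpha ^+ 2 * (1 - alpha) by rewrite mulr_gt0 ?exprn_gt0 ?subr_gt0.
pose B := 200 * N%:R ^+ 2 / (alpha ^+ 2 * (1 - alpha)).
have B_ge0 : 0 <= B by apply: divr_ge0; [rewrite mulr_ge0 // exprn_ge0 | exact: ltW].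
exists (Num.Def.archi_bound B) => T T_ge [k alphaT] [pb [sb NE]].
have T_large : 200 * N%:R ^+ 2 < alpha ^+ 2 * (1 - alpha) * T%:R.
  have : B < T%:R by apply: lt_le_trans (archi_boundP B_ge0) _; rewrite ler_nat.
  by rewrite ltr_pdivrMr // [X in _ < X]mulrC.
have [_ kT] := budget_bounds N_ge2 alpha_gt0 alpha_lt1 alphaT T_large.
have pb_uniform := funext (nash_eq_uniform alphaT kT NE).
rewrite pb_uniform in NE.
exact: uniform_nash_eq_false N_ge2 alpha_gt0 alpha_lt1 alphaT T_large _ NE.
Qed.
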